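(* Let $K=2q$ with $q\ge 4$ and suppose $t=KM/N=3$. Then the D2D coded caching rate $R=N/M-1$ is achievable with subpacketization $$F=\frac{3K^2(K-2)}{8},$$ so that $F/F_{\rm JCM}=\frac{3}{4}\cdot\frac{K}{K-1}$.
   Context: D2D coded caching setting: there are $N\ge 1$ files $W_1,\dots,W_N$ and $K\ge 2$ users, each with a cache of size $M$ files, $0<M\le N$, and $t:=KM/N$ is assumed to be a positive integer. A D2D coded caching scheme with (uncoded placement and) subpacketization $F\in\mathbb{N}_+$ is defined as follows. Fix a packet size $b\ge 1$; each file is a sequence of $F$ packets $W_n=(W_n^{(1)},\dots,W_n^{(F)})$, $W_n^{(j)}\in\{0,1\}^b$. Placement: each user $k\in[K]$ stores the packets $\{W_n^{(j)}:(n,j)\in Z_k\}$ for a fixed index set $Z_k\subseteq[N]\times[F]$ with $|Z_k|\le MF$ (independent of demands and file contents). Delivery: for every demand vector $\mathbf d=(d_1,\dots,d_K)\in[N]^K$, each user $k$ broadcasts to all other users $\ell_k(\mathbf d)\in\mathbb{N}$ blocks in $\{0,1\}^b$, each a deterministic function of the packets stored by user $k$; it is required that for all file contents each user $k$ can recover all $F$ packets of $W_{d_k}$ from its stored packets and the blocks sent by the other users. The rate is $R=\max_{\mathbf d}\frac{1}{F}\sum_{k=1}^K\ell_k(\mathbf d)$ (transmitted bits normalized by the file size $Fb$). The rate $R$ is achievable with subpacketization $F$ if such a scheme with rate $R$ exists for every packet size $b\ge 1$. Define $F_{\rm JCM}:=t\binom{K}{t}$. *)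

From mathcomp Require Import all_boot all_order all_algebra.
Set Implicit Arguments. Unset Strict Implicit. Unset Printing Implicit Defensive.
Import Order.TTheory GRing.Theory Num.Theory.

Definition block (b : nat) := (b.-tuple bool)%type.
(* The whole file library: packet j of file n is W (n, j). *)
Definition library (N F b : nat) := {ffun 'I_N * 'I_F -> block b}.
Definition demand (N K : nat) := {ffun 'I_K -> 'I_N}.

(* What a user with index set Z sees: the packets in Z, everything else
   replaced by a fixed dummy value (all zeros). *)
Definition maskZ (N F b : nat) (Z : {set 'I_N * 'I_F}) (W : library N F b)
  : library N F b :=
  [ffun p => if p \in Z then W p else nseq_tuple b false].

(* A D2D coded caching scheme (uncoded placement) with N files, K users,
   cache size M, subpacketization F, packet size b and rate R.
   - Z k    : index set of packets cached by user k, |Z k| <= M F;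
   - ell k d: number of b-bit blocks broadcast by user k for demand d;
   - enc k d: user k's transmissions, a function of its cached packets only;
   - dec k d: user k's decoder, a function of its cached packets and of the
              transmissions of the other users only;
   - rate = max_d (1/F) sum_k ell k d = R. *)
Definition D2D_scheme (N K : nat) (M : rat) (F b : nat) (R : rat) : Prop :=
  exists (Z : 'I_K -> {set 'I_N * 'I_F})
         (ell : 'I_K -> demand N K -> nat)
         (enc : 'I_K -> demand N K -> library N F b -> seq (block b))
         (dec : 'I_K -> demand N K -> library N F b ->
                  ('I_K -> seq (block b)) -> 'I_F -> block b),
    [/\ (forall k, (#|Z k|%:R <= M * F%:R)%R),
        (forall k d W, size (enc k d W) = ell k d),
        (forall k d (W : library N F b) (f : 'I_F),
            dec k d (maskZ (Z k) W)
                (fun j => if j == k then [::] else enc j d (maskZ (Z j) W)) f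
            = W (d k, f)) &
        ((\max_(d : demand N K) \sum_(k < K) ell k d)%:R = R * F%:R)%R].

Definition achievable (N K : nat) (M : rat) (F : nat) (R : rat) : Prop :=
  forall b : nat, 1 <= b -> D2D_scheme N K M F b R.

Definition F_JCM (K t : nat) : nat := t * 'C(K, t).

From mathcomp Require Import all_boot all_order all_algebra zify ring lra.
Import Order.TTheory GRing.Theory Num.Theory.
Set Implicit Arguments. Unset Strict Implicit. Unset Printing Implicit Defensive.

(* The K = 2q users form two sides of q users.  A packet is indexed by a side
   s, a pair A of points, a point z and a copy r < 3; it is cached by the two
   users of side s at the points of A and by the user of the other side at z,
   so every packet is in exactly t = 3 caches.  Delivery sends XORs of packets
   such that the sender caches every summand and each intended receiver caches
   every summand but its own.  Each triple B of one side is served by every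
   user of the other side; each ordered pair (a, y) of one side together with
   each pair A' of the other side is served by a, which gives y its missing
   copy-2 packet and the two users of A' the copy of pair {a, y} selected by
   the order of a and y.  Counting these messages gives
   q^2 (q - 1) (2q - 3) = (N/M - 1) F. *)

Section XorBlocks.
Variable b : nat.

Definition zero_block : block b := nseq_tuple b false.

Definition add_block (u v : block b) : block b :=
  [tuple tnth u c (+) tnth v c | c < b].

Definition xor_block (I : finType) (P : pred I) (w : I -> block b) : block b :=
  [tuple \big[addb/false]_(x | P x) tnth (w x) c | c < b].

Lemma eq_xor_block (I : finType) (P : pred I) (w1 w2 : I -> block b) :
  (forall x, P x -> w1 x = w2 x) -> xor_block P w1 = xor_block P w2.
Proof.
move=> eq_w; apply: eq_from_tnth => c; rewrite !tnth_mktuple.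
by apply: eq_bigr => x /eq_w ->.
Qed.

Lemma xor_block_cancel (I : finType) (P : pred I) (w : I -> block b) x0 :
  P x0 -> add_block (xor_block P w) (xor_block [pred x | P x && (x != x0)] w) = w x0.
Proof.
move=> Px0; apply: eq_from_tnth => c; rewrite !tnth_mktuple (bigD1 x0) //=.
by rewrite -addbA addbb addbF.
Qed.

End XorBlocks.

Lemma ord_bijection (T : finType) n : #|T| = n ->
  exists (f : 'I_n -> T) (g : T -> 'I_n), cancel f g /\ cancel g f.
Proof.
move=> cardT; exists (fun i => enum_val (cast_ord (esym cardT) i)).
exists (fun x => cast_ord cardT (enum_rank x)).
by split => [i|x]; rewrite ?enum_valK ?cast_ordKV // cast_ordK enum_rankK.
Qed.

Section XorDelivery.

Variables (user packet message : finType).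
Variable cached : user -> packet -> bool.
Variable sender : message -> user.
Variable delivers : message -> user -> packet -> bool.

Hypothesis sender_cached : forall t k p, delivers t k p -> cached (sender t) p.
Hypothesis receiver_cached : forall t k p k' p',
  delivers t k p -> delivers t k' p' -> (k, p) != (k', p') -> cached k p'.
Hypothesis uncached_delivered : forall k p, ~~ cached k p -> exists t, delivers t k p.

Section Indexing.

Variables (N K F b : nat).
Variables (u_of : 'I_K -> user) (idx_of_u : user -> 'I_K).
Variables (p_of : 'I_F -> packet) (idx_of_p : packet -> 'I_F).
Hypotheses (u_ofK : cancel u_of idx_of_u) (idx_of_uK : cancel idx_of_u u_of).
Hypotheses (p_ofK : cancel p_of idx_of_p) (idx_of_pK : cancel idx_of_p p_of).

Definition placement (k : 'I_K) : {set 'I_N * 'I_F} :=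
  [set x | cached (u_of k) (p_of x.2)].

Definition sent_by (k : 'I_K) : seq message :=
  [seq t <- enum message | sender t == u_of k].

Definition payload (d : demand N K) (W : library N F b) (x : user * packet) :=
  W (d (idx_of_u x.1), idx_of_p x.2).

Definition encode (k : 'I_K) (d : demand N K) (W : library N F b) : seq (block b) :=
  [seq xor_block (fun x => delivers t x.1 x.2) (payload d W) | t <- sent_by k].

Definition decode (k : 'I_K) (d : demand N K) (W : library N F b)
    (tr : 'I_K -> seq (block b)) (f : 'I_F) : block b :=
  if cached (u_of k) (p_of f) then W (d k, f) else
  if [pick t | delivers t (u_of k) (p_of f)] is Some t then
    let j := idx_of_u (sender t) in
    (* the XOR for [t] sits in the transmission of [j] at the position of [t] *)
    add_block (nth (zero_block b) (tr j) (index t (sent_by j)))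
      (xor_block [pred x | delivers t x.1 x.2 && (x != (u_of k, p_of f))]
         (payload d W))
  else zero_block b.

Lemma card_placement k : #|placement k| = (N * #|[set p | cached (u_of k) p]|)%N.
Proof.
have -> : placement k = setX [set: 'I_N] (p_of @^-1: [set p | cached (u_of k) p]).
  by apply/setP => -[n f]; rewrite !inE.
rewrite cardsX cardsT card_ord on_card_preimset //.
exact/onW_bij/(Bijective p_ofK idx_of_pK).
Qed.

Lemma maskZ_placement j (W : library N F b) x :
  cached (u_of j) (p_of x.2) -> maskZ (placement j) W x = W x.
Proof. by move=> cx; rewrite /maskZ ffunE inE cx. Qed.

Lemma decodeK k d W f :
  decode k d (maskZ (placement k) W)
    (fun j => if j == k then [::] else encode j d (maskZ (placement j) W)) f
  = W (d k, f).
Proof.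
rewrite /decode; case: ifP => [cf|/negbT ncf]; first by rewrite maskZ_placement.
case: pickP => [t dt|none]; last first.
  by have [t dt] := uncached_delivered ncf; rewrite none in dt.
set j := idx_of_u (sender t).
have neq_jk : j != k.
  by apply: contraNneq ncf => <-; rewrite /j idx_of_uK; exact: sender_cached dt.
have t_sent : t \in sent_by j by rewrite mem_filter /j idx_of_uK eqxx mem_enum.
rewrite (negbTE neq_jk) (nth_map t) ?index_mem // nth_index //.
have -> : W (d k, f) = payload d W (u_of k, p_of f) by rewrite /payload u_ofK p_ofK.
rewrite -(xor_block_cancel (P := fun x => delivers t x.1 x.2) _
            (x0 := (u_of k, p_of f)) dt).
congr add_block; apply: eq_xor_block => -[u p] /=.
  move=> dx; rewrite /payload maskZ_placement //= idx_of_pK /j idx_of_uK.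
  exact: sender_cached dx.
case/andP=> dx neq; rewrite /payload maskZ_placement //= idx_of_pK.
by apply: receiver_cached dt dx _; rewrite eq_sym.
Qed.

Lemma sum_size_sent_by : (\sum_(k < K) size (sent_by k))%N = #|message|.
Proof.
rewrite (reindex idx_of_u) /=; last by exists u_of => ? _.
rewrite -sum1_card (partition_big sender xpredT) //=.
apply: eq_bigr => u _; rewrite /sent_by idx_of_uK size_filter.
by rewrite -sum1_count big_enum_cond big_mkcond [RHS]big_mkcond.
Qed.

End Indexing.

Lemma xor_delivery_scheme (N K F b : nat) (M R : rat) :
  (0 < N)%N -> #|user| = K -> #|packet| = F ->
  (forall k, ((N * #|[set p | cached k p]|)%:R <= M * F%:R)%R) ->
  (#|message|%:R = R * F%:R)%R ->
  D2D_scheme N K M F b R.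
Proof.
move=> N_gt0 /ord_bijection[u_of [idx_of_u [u_ofK idx_of_uK]]].
move=> /ord_bijection[p_of [idx_of_p [p_ofK idx_of_pK]]] cache_size rate.
exists (placement N u_of p_of), (fun k _ => size (sent_by u_of k)).
exists (encode u_of idx_of_u idx_of_p), (decode u_of idx_of_u p_of idx_of_p); split.
- by move=> k; rewrite (card_placement _ _ p_ofK idx_of_pK); apply: cache_size.
- by move=> k d W; rewrite size_map.
- by move=> k d W f; apply: decodeK.
- rewrite (eq_bigr (fun=> #|message|)) => [|d _]; last exact: sum_size_sent_by.
  suff -> : (\max_(d : demand N K) #|message|)%N = #|message| by exact: rate.
  apply/eqP; rewrite eqn_leq; apply/andP; split; first exact/bigmax_leqP.
  exact: (leq_bigmax [ffun=> Ordinal N_gt0]).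
Qed.

End XorDelivery.

Lemma cards2_other (T : finType) (A : {set T}) x y z :
  #|A| == 2 -> y \in A -> x \in A -> z \in A -> x != y -> z != y -> z = x.
Proof.
move/cards2P=> [u [v [neq_uv ->]]]; rewrite !in_set2.
by move=> /orP[]/eqP-> /orP[]/eqP-> /orP[]/eqP->; rewrite ?eqxx // eq_sym ?neq_uv.
Qed.

Lemma bin2_ffact n : 'C(n, 2) * 2 = n * n.-1.
Proof. by rewrite -[2]/(2`!) bin_ffact ffactnS ffactn1. Qed.

Lemma bin3_ffact n : 'C(n, 3) * 6 = n * (n.-1 * n.-2).
Proof. by rewrite -[6]/(3`!) bin_ffact !ffactnS ffactn0 muln1. Qed.

Lemma card_ksubsets (T : finType) k : #|{: {A : {set T} | #|A| == k}}| = 'C(#|T|, k).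
Proof. by rewrite card_sub -card_draws; apply: eq_card => A; rewrite !inE. Qed.

Lemma lift_onto n (a y : 'I_n) : y != a -> exists y' : 'I_n.-1, lift a y' = y.
Proof. by case: (unliftP a y) => [y' ->|->]; [exists y'|rewrite eqxx]. Qed.

Section TwoSidedPlacement.
Variable q : nat.

Local Notation pair := {A : {set 'I_q} | #|A| == 2}.
Local Notation triple := {B : {set 'I_q} | #|B| == 3}.
Local Notation user := (bool * 'I_q)%type.
Local Notation packet := (bool * pair * 'I_q * 'I_3)%type.
Local Notation message :=
  ((bool * triple * 'I_q * 'I_3) + (bool * 'I_q * 'I_q.-1 * pair))%type.

Definition copy0 : 'I_3 := @Ordinal 3 0 isT.
Definition copy1 : 'I_3 := @Ordinal 3 1 isT.
Definition copy2 : 'I_3 := @Ordinal 3 2 isT.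

Definition cached (k : user) (p : packet) : bool :=
  let: (s, A, z, _) := p in if k.1 == s then k.2 \in val A else k.2 == z.

Definition sender (t : message) : user :=
  match t with
  | inl (e, _, x, _) => (~~ e, x)
  | inr (e, a, _, _) => (e, a)
  end.

(* [lift a y'] enumerates the points y different from a. *)
Definition delivers (t : message) (k : user) (p : packet) : bool :=
  let: (s, A, z, r) := p in
  match t with
  | inl (e, B, x, c) =>
      [&& k.1 == e, k.2 \in val B, s == e, val A == val B :\ k.2, z == x & r == c]
  | inr (e, a, y', A') =>
      let y := lift a y' in
      [&& k.1 == e, k.2 == y, s == ~~ e, val A == val A', z == a & r == copy2]
      || [&& k.1 == ~~ e, k.2 \in val A', s == e, val A == [set a; y]
             & [&& z \in val A', z != k.2 & r == (if a < y then copy0 else copy1)]]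
  end.

Lemma sender_cached t k p : delivers t k p -> cached (sender t) p.
Proof.
case: p => [[[s A] z] r]; case: t => [[[[e B] x] c]|[[[e a] y'] A']] /=.
  by case/and5P=> _ _ /eqP-> _ /andP[/eqP-> _]; case: e; rewrite /= eqxx.
case/orP=> [/and5P[_ _ /eqP-> _ /andP[/eqP-> _]]|/and5P[_ _ /eqP-> /eqP-> _]].
  by case: e; rewrite /= eqxx.
by rewrite eqxx set21.
Qed.

Lemma delivers_functional t k p p' : delivers t k p -> delivers t k p' -> p = p'.
Proof.
case: k => ke kx; case: p => [[[s A] z] r]; case: p' => [[[s' A'] z'] r'].
case: t => [[[[e B] x] c]|[[[e a] y'] C]] /=.
  case/and5P=> _ _ /eqP-> /eqP eA /andP[/eqP-> /eqP->].
  case/and5P=> _ _ /eqP-> /eqP eA' /andP[/eqP-> /eqP->].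
  by congr (_, _, _, _); apply/eqP; rewrite -val_eqE /= eA eA'.
case/orP=> [/and5P[/eqP ke_e _ /eqP-> /eqP eA /andP[/eqP-> /eqP->]]
           |/and5P[/eqP ke_e kxC /eqP-> /eqP eA /and3P[zC z_kx /eqP->]]];
  case/orP=> [/and5P[/eqP ke_e' _ /eqP-> /eqP eA' /andP[/eqP-> /eqP->]]
             |/and5P[/eqP ke_e' _ /eqP-> /eqP eA' /and3P[zC' z_kx' /eqP->]]];
  rewrite ?ke_e' in ke_e; try by move: ke_e; case: (e).
  by congr (_, _, _, _); apply/eqP; rewrite -val_eqE /= eA eA'.
congr (_, _, _, _); first by apply/eqP; rewrite -val_eqE /= eA eA'.
exact: cards2_other (valP C) kxC zC' zC z_kx' z_kx.
Qed.

Lemma receiver_cached_other t k p k' p' :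
  delivers t k p -> delivers t k' p' -> k != k' -> cached k p'.
Proof.
case: k => ke kx; case: k' => ke' kx'; case: p => [[[s A] z] r].
case: p' => [[[s' A'] z'] r'].
case: t => [[[[e B] x] c]|[[[e a] y'] C]] /=.
  case/and5P=> /eqP-> kxB _ _ _; case/and5P=> /eqP-> _ /eqP-> /eqP-> _ neq_k.
  by rewrite eqxx in_setD1 kxB andbT; apply: contraNneq neq_k => ->.
case/orP=> [/and5P[/eqP-> /eqP-> _ _ _]|/and5P[/eqP-> kxC _ _ _]];
  case/orP=> [/and5P[/eqP-> /eqP-> /eqP-> /eqP-> /andP[/eqP-> _]]
             |/and5P[/eqP-> kxC' /eqP-> /eqP-> /and3P[zC' z_kx' _]]] neq_k.
- by rewrite eqxx in neq_k.
- by rewrite eqxx set22.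
- by rewrite eqxx.
- have -> : (~~ e == e) = false by case: (e).
  have neq_kx : kx != kx' by apply: contraNneq neq_k => ->.
  by rewrite (cards2_other (valP C) kxC' kxC zC' neq_kx z_kx').
Qed.

Lemma receiver_cached t k p k' p' :
  delivers t k p -> delivers t k' p' -> (k, p) != (k', p') -> cached k p'.
Proof.
move=> dp dp'; have [eq_k|neq_k _] := eqVneq k k'.
  by rewrite -eq_k in dp' *; rewrite (delivers_functional dp dp') eqxx.
exact: receiver_cached_other dp dp' neq_k.
Qed.

Lemma pair_oriented (A : pair) (r : 'I_3) : r != copy2 ->
  exists a y, [/\ y != a, val A = [set a; y] & r = if a < y then copy0 else copy1].
Proof.
have /cards2P[u [v [neq_uv ->]]] := valP A.
have r01 : r != copy2 -> r = copy0 \/ r = copy1.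
  by case: r => -[|[|[]]] // ? _; [left|right]; apply: val_inj.
move=> /r01[]->.
- have [lt_uv|lt_vu|/val_inj eq_uv] := ltngtP u v; last by rewrite eq_uv eqxx in neq_uv.
    by exists u, v; rewrite lt_uv eq_sym.
  by exists v, u; rewrite lt_vu setUC.
- have [lt_uv|lt_vu|/val_inj eq_uv] := ltngtP u v; last by rewrite eq_uv eqxx in neq_uv.
    by exists v, u; rewrite ltnNge (ltnW lt_uv) setUC.
  by exists u, v; rewrite ltnNge (ltnW lt_vu) eq_sym.
Qed.

Lemma uncached_delivered k p : ~~ cached k p -> exists t, delivers t k p.
Proof.
case: k => e x; case: p => [[[s A] z] r] /=.
have [-> xA|neq_es] := eqVneq e s.
  have cardB : #|x |: val A| == 3 by rewrite cardsU1 xA (eqP (valP A)).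
  exists (inl (s, exist _ (x |: val A) cardB, z, r)).
  by rewrite /= setU11 (setU1K xA) !eqxx.
move=> neq_xz.
have -> : s = ~~ e by move: neq_es; case: (e); case: (s).
have [->|neq_r2] := eqVneq r copy2.
  have [y' <-] := lift_onto neq_xz.
  by exists (inr (e, z, y', A)); rewrite /= !eqxx.
have [a [y [neq_ya eA ->]]] := pair_oriented A neq_r2.
have cardA' : #|[set x; z]| == 2 by rewrite cards2 neq_xz.
have [y' eyy'] := lift_onto neq_ya.
exists (inr (~~ e, a, y', exist _ [set x; z] cardA')).
have bump_y : bump a y' = y by rewrite -eyy'.
by rewrite /= negbK eyy' bump_y eA set21 set22 (eq_sym z x) neq_xz !eqxx orbT.
Qed.

Lemma card_user : #|{: user}| = (2 * q)%N.
Proof. by rewrite card_prod card_bool card_ord. Qed.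

Lemma card_packet : #|{: packet}| = (3 * q * (q * q.-1))%N.
Proof.
by rewrite !card_prod card_bool card_ksubsets !card_ord -bin2_ffact; ring.
Qed.

Lemma card_message : #|{: message}| = (q * (q * q.-1) * (q.-2 + q.-1))%N.
Proof.
rewrite card_sum !card_prod card_bool !card_ksubsets !card_ord.
have -> c3 c2 : (2 * c3 * q * 3 + 2 * q * q.-1 * c2 = c3 * 6 * q + q * q.-1 * (c2 * 2))%N.
  by ring.
by rewrite bin3_ffact bin2_ffact; ring.
Qed.

Lemma card_pairs_through (x : 'I_q) : #|[set A : pair | x \in val A]| = q.-1.
Proof.
have <- : #|[set [set x; y] | y in [set~ x]]| = q.-1.
  rewrite card_in_imset ?cardsC1 ?card_ord // => y1 y2; rewrite !inE => y1x _ eq_y.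
  by have := set22 x y1; rewrite eq_y in_set2 (negbTE y1x) => /eqP.
rewrite -(card_imset _ val_inj); apply: eq_card => B; apply/imsetP/imsetP.
  case=> A; rewrite inE => xA ->.
  have /cards2P[u [v [neq_uv eA]]] := valP A.
  move: xA; rewrite eA in_set2 => /orP[]/eqP ->.
    by exists v; rewrite ?inE // eq_sym.
  by exists u; rewrite ?inE // setUC.
case=> y; rewrite !inE => neq_yx ->.
have card_xy : #|[set x; y]| == 2 by rewrite cards2 (eq_sym x) neq_yx.
by exists (exist _ [set x; y] card_xy); rewrite ?inE ?eqxx.
Qed.

Lemma card_cached k : (#|[set p | cached k p]| * 2 = 9 * (q * q.-1))%N.
Proof.
case: k => e x.
have -> : [set p | cached (e, x) p] =
    setX (setX (setX [set e] [set A : pair | x \in val A]) setT) setT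
    :|: setX (setX (setX [set ~~ e] setT) [set x]) setT.
  apply/setP => -[[[s A] z] r]; rewrite !inE /=.
  by case: e; case: s; rewrite /= ?andbT ?orbF // eq_sym.
rewrite cardsU (_ : _ :&: _ = set0); last first.
  by apply/setP => -[[[s A] z] r]; rewrite !inE; case: e; case: s; rewrite ?andbF.
rewrite cards0 subn0 !cardsX !cards1 !cardsT card_pairs_through card_ksubsets !card_ord.
have -> c2 : ((1 * q.-1 * q * 3 + 1 * c2 * 1 * 3) * 2 = 6 * (q * q.-1) + 3 * (c2 * 2))%N.
  by ring.
by rewrite bin2_ffact; ring.
Qed.

Local Open Scope ring_scope.

Lemma cache_load N (M : rat) k : (0 < q)%N -> M * (2 * q)%:R = 3 * N%:R ->
  (N * #|[set p | cached k p]|)%:R = M * (3 * q * (q * q.-1))%:R.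
Proof.
move=> q_gt0 memory; have q_neq0 : q%:R != 0 :> rat by rewrite pnatr_eq0 -lt0n.
have cached2 : #|[set p | cached k p]|%:R * 2 = 9 * (q%:R * q.-1%:R) :> rat.
  by rewrite -natrM card_cached !natrM.
rewrite natrM (_ : #|_|%:R = 9 * (q%:R * q.-1%:R) / 2); last by rewrite -cached2; field.
rewrite (_ : M = 3 * N%:R / (2 * q%:R)); last by rewrite -memory natrM; field.
by rewrite !natrM; field.
Qed.

Lemma delivery_load N (M : rat) : (2 <= q)%N -> M != 0 -> M * (2 * q)%:R = 3 * N%:R ->
  #|{: message}|%:R = (N%:R / M - 1) * (3 * q * (q * q.-1))%:R.
Proof.
move=> q_ge2 M_neq0 memory.
rewrite -[N%:R](mulKf (_ : 3 != 0 :> rat)) // -memory natrM.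
rewrite card_message (_ : q.-2 + q.-1 = 2 * q - 3)%N; last by lia.
rewrite !natrM natrB; last by lia.
by rewrite natrM; field.
Qed.

End TwoSidedPlacement.

Lemma subpacketization_eq q : (3 * (2 * q) ^ 2 * (2 * q - 2) %/ 8 = 3 * q * (q * q.-1))%N.
Proof.
rewrite (_ : 3 * _ * _ = 3 * q * (q * q.-1) * 8)%N ?mulnK //.
by case: q => [//|q]; rewrite (_ : 2 * q.+1 - 2 = 2 * q)%N /=; [ring | lia].
Qed.

Lemma F_JCM_double_3 q : (0 < q)%N -> F_JCM (2 * q) 3 = (2 * q * (2 * q).-1 * q.-1)%N.
Proof.
move=> q_gt0; apply/eqP; rewrite -(eqn_pmul2r (isT : 0 < 2)); apply/eqP.
transitivity ('C(2 * q, 3) * 6)%N; first by rewrite /F_JCM; ring.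
by rewrite bin3_ffact (_ : (2 * q).-2 = 2 * q.-1)%N; [ring | lia].
Qed.

Local Open Scope ring_scope.

Lemma subpacketization_ratio q : (2 <= q)%N ->
  (3 * q * (q * q.-1))%:R / (F_JCM (2 * q) 3)%:R
  = 3 / 4 * ((2 * q)%:R / ((2 * q)%:R - 1)) :> rat.
Proof.
move=> q_ge2; rewrite F_JCM_double_3; last by lia.
have q_ge2r : 2 <= q%:R :> rat by rewrite ler_nat.
have predq : q.-1%:R = q%:R - 1 :> rat by rewrite -subn1 natrB //; lia.
have pred2q : (2 * q).-1%:R = 2 * q%:R - 1 :> rat by rewrite -subn1 natrB ?natrM //; lia.
rewrite !natrM predq pred2q.
by field; apply/and3P; split; apply/negP => /eqP; lra.
Qed.

Theorem mainTheorem9 (q N : nat) (M : rat) :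
  (4 <= q)%N -> (1 <= N)%N -> 0 < M -> M <= N%:R ->
  (2 * q)%:R * M / N%:R = 3%:R ->
  let K := (2 * q)%N in
  let F := (3 * K ^ 2 * (K - 2) %/ 8)%N in
  achievable N K M F (N%:R / M - 1) /\
  F%:R / (F_JCM K 3)%:R = (3%:R / 4%:R) * (K%:R / (K%:R - 1)) :> rat.
Proof.
move=> q_ge4 N_gt0 M_gt0 _ memory K F.
have memory' : M * (2 * q)%:R = 3 * N%:R.
  by rewrite -memory mulrC divfK // pnatr_eq0 -lt0n.
rewrite /F subpacketization_eq; split; last by apply: subpacketization_ratio; lia.
move=> b _; apply: xor_delivery_scheme N_gt0 (card_user q) (card_packet q) _ _.
- exact: sender_cached.
- exact: receiver_cached.
- exact: uncached_delivered.
- by move=> k; rewrite (@cache_load q N M k) //; lia.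
- by apply: delivery_load; rewrite ?lt0r_neq0 //; lia.
Qed.
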